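(* For all positive integers $N$ (number of files) and $K$ (number of users) and every $M\in[0,N]$, the memory-rate pair $\left(M,\ \min\{N,K\}\left(1-\frac{M}{N}\right)\right)$ is achievable with demand privacy for the $(N,K)$ coded caching problem.
   Context: Demand-private coded caching model: a server holds $N$ independent files $W_0,\dots,W_{N-1}$, each uniformly distributed on $[2^F]:=\{0,1,\dots,2^F-1\}$ (i.e. $F$ bits), and is connected to $K$ users by a noiseless broadcast link. Write $[n]=\{0,1,\dots,n-1\}$ and $\bar W=(W_0,\dots,W_{N-1})$. User $k\in[K]$ demands file index $D_k$; the $D_k$ are independent and uniform on $[N]$; $\bar D=(D_0,\dots,D_{K-1})$ and $\tilde D_k$ denotes all demands except $D_k$. User $k$ shares with the server a random key $S_k$ taking values in a finite set $\mathcal S_k$ (unknown to other users), $\bar S=(S_0,\dots,S_{K-1})$, and the server has private randomness $P$ in a finite set $\mathcal P$; the random variables $P$, the $S_k$, the $D_k$ and the $W_i$ are mutually independent. An $(N,K,M,R)$-private scheme consists of cache encoders $C_k:\mathcal S_k\times\mathcal P\times[2^F]^N\to[2^{MF}]$, with cache content $Z_k=(C_k(S_k,P,\bar W),S_k)$; a transmission encoder $E:[2^F]^N\times[N]^K\times\mathcal P\times\mathcal S_0\times\dots\times\mathcal S_{K-1}\to[2^{RF}]$ and an auxiliary encoder $J:[N]^K\times\mathcal P\times\mathcal S_0\times\dots\times\mathcal S_{K-1}\to\mathcal J$, where $\log_2|\mathcal J|$ is negligible compared to $F$; the broadcast message is $X=(E(\bar W,\bar D,P,\bar S),J(\bar D,P,\bar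 S))$; and decoders $G_k$ such that user $k$ recovers $W_{D_k}=G_k(D_k,S_k,J(\bar D,P,\bar S),E(\bar W,\bar D,P,\bar S),C_k(S_k,P,\bar W))$ for all values, while the privacy condition $I(\tilde D_k; Z_k, X, D_k)=0$ holds for every $k\in[K]$. A pair $(M,R)$ is achievable with demand privacy for the $(N,K)$ coded caching problem if an $(N,K,M,R)$-private scheme exists for some $F$. *)

From HB Require Import structures.
From mathcomp Require Import all_boot all_order all_algebra.
From mathcomp Require Import reals exp Rstruct.
From Stdlib Require Rdefinitions.
Notation R := Rdefinitions.R.

Set Implicit Arguments.
Unset Strict Implicit.
Unset Printing Implicit Defensive.

Import Order.TTheory GRing.Theory Num.Theory.
Local Open Scope ring_scope.

Definition log2 (x : R) : R := ln x / ln 2.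

Definition is_pmf (T : finType) (p : T -> R) : Prop :=
  (forall t, 0 <= p t) /\ \sum_(t : T) p t = 1.

Definition mutual_info (Om : finType) (mu : Om -> R)
    (alpha beta : finType) (A : Om -> alpha) (B : Om -> beta) : R :=
  \sum_(a : alpha) \sum_(b : beta)
    let pab := \sum_(w : Om | (A w == a) && (B w == b)) mu w in
    let pa := \sum_(w : Om | A w == a) mu w in
    let pb := \sum_(w : Om | B w == b) mu w in
    if pab == 0 then 0 else pab * log2 (pab / (pa * pb)).

Definition fileT (F : nat) := 'I_(2 ^ F).
Definition libT (N F : nat) := {ffun 'I_N -> fileT F}.
Definition demT (N K : nat) := {ffun 'I_K -> 'I_N}.

(* D~_k : all demands except D_k (encoded as the demand vector with the
   k-th entry erased). *)
Definition other_demands (N K : nat) (k : 'I_K) (d : demT N K)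
  : {ffun 'I_K -> option 'I_N} :=
  [ffun j => if j == k then None else Some (d j)].

(* An (N,K,M,R)-private scheme with file size F bits, whose auxiliary
   transmission alphabet J satisfies log2 |J| <= eps * F.
   [2^x] = {i in nat | i < 2^x}; a map into [2^x] is modelled as a map
   into an ordinal type 'I_c all of whose elements are < 2^x. *)
Definition private_scheme (N K : nat) (M Rt : R) (F : nat) (eps : R) : Prop :=
  exists (Pt : finType) (pP : Pt -> R)
         (S : 'I_K -> finType) (pS : forall k : 'I_K, S k -> R)
         (cM cR : nat) (Jt : finType)
         (C : forall k : 'I_K, S k -> Pt -> libT N F -> 'I_cM)
         (E : libT N F -> demT N K -> Pt -> {dffun forall k : 'I_K, S k} -> 'I_cR)
         (J : demT N K -> Pt -> {dffun forall k : 'I_K, S k} -> Jt)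
         (G : forall k : 'I_K, 'I_N -> S k -> Jt -> 'I_cR -> 'I_cM -> fileT F),
        is_pmf pP /\ (forall k, is_pmf (pS k)) /\
        (forall i : 'I_cM, (i%:R : R) < powR 2 (M * F%:R)) /\
        (forall i : 'I_cR, (i%:R : R) < powR 2 (Rt * F%:R)) /\
        log2 (#|Jt|%:R) <= eps * F%:R /\
        (forall (w : libT N F) (d : demT N K) (p : Pt)
                (s : {dffun forall k : 'I_K, S k}) (k : 'I_K),
            G k (d k) (s k) (J d p s) (E w d p s) (C k (s k) p w) = w (d k)) /\
        ((* demand privacy: I(D~_k ; Z_k, X, D_k) = 0 for every k, where
           P, the S_k, the D_k (uniform on [N]) and the W_i (uniform on
           [2^F]) are mutually independent *)
        let Om := (Pt * {dffun forall k : 'I_K, S k} * libT N F * demT N K)%type in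
        let mu := fun om : Om =>
          let: (p, s, _, _) := om in
          pP p * (\prod_(k : 'I_K) pS k (s k))
            * ((2 ^ F)%:R ^- N) * (N%:R ^- K) in
        forall k : 'I_K,
          mutual_info mu
            (fun om : Om => let: (_, _, _, d) := om in other_demands k d)
            (fun om : Om => let: (p, s, w, d) := om in
               ((C k (s k) p w, s k), (E w d p s, J d p s), d k)) = 0).

Definition achievable_private (N K : nat) (M Rt : R) : Prop :=
  forall eps : R, 0 < eps ->
    exists F : nat, (0 < F)%N /\ private_scheme N K M Rt F eps.

(** Split each file into a part [A] of [a] bits, pieces [B_(j,i)] of [c] bits indexed by a
    user [j] and a file index [i], and a part [C] of [e] bits.  User [k] holds a key
    [(pad_k, sh_k)] and caches the [C] parts and every piece of every file except
    [B_(k, sh_k)].  The server sends the [A] parts (all of them if [N <= K], otherwise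
    [A(W_(d_j)) + pad_j] for every user [j]), the sum over [(j, i)] of the pieces [B_(j,i)] of
    the files [W_(i + d_j - sh_j)], and the shifts [d_j - sh_j].  For [(j, i) = (k, sh_k)] the
    file is [W_(d_k)], so user [k] recovers its missing piece from the sum.
    Replacing the key of every other user [j] by [(pad_j - A(W_(d_j)), d_j - sh_j)] is a
    bijection of the uniformly distributed keys which turns the view of user [k] into a
    function of [d_k] alone; hence that view is independent of the other demands.
    With [c = 2] and [q = floor(M F / N)] cached bits per file, the cache holds [N q <= M F]
    bits and, when [min(N,K) >= 2], the [min(N,K) (F - q - 2) + 2] broadcast bits fit into
    [min(N,K) (1 - M/N) F]; the [log2 N^K] bits of shifts are negligible for large [F]. *)

From HB Require Import structures.
From mathcomp Require Import all_boot all_order all_algebra.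
From mathcomp Require Import reals exp Rstruct.
From mathcomp Require Import ring lra zify.

Set Implicit Arguments.
Unset Strict Implicit.
Unset Printing Implicit Defensive.
Import Order.TTheory GRing.Theory Num.Theory.
Local Open Scope ring_scope.

Section MutualInfo.
Variables (Om alpha beta : finType) (mu : Om -> R) (A : Om -> alpha) (B : Om -> beta).

Lemma eq_mutual_info (mu' : Om -> R) (A' : Om -> alpha) (B' : Om -> beta) :
  mu =1 mu' -> A =1 A' -> B =1 B' -> mutual_info mu A B = mutual_info mu' A' B'.
Proof.
move=> emu eA eB; apply: eq_bigr => a _; apply: eq_bigr => b _ /=.
have sumE (P P' : pred Om) : P =1 P' -> \sum_(w | P w) mu w = \sum_(w | P' w) mu' w.
  by move=> eP; apply: eq_big.
rewrite (sumE _ (fun w => (A' w == a) && (B' w == b))) => [|w]; last by rewrite eA eB.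
rewrite (sumE _ (fun w => A' w == a)) => [|w]; last by rewrite eA.
by rewrite (sumE _ (fun w => B' w == b)) => [|w]; last by rewrite eB.
Qed.

Lemma mutual_info_indep :
  (forall a b, \sum_(w | (A w == a) && (B w == b)) mu w =
               (\sum_(w | A w == a) mu w) * \sum_(w | B w == b) mu w) ->
  mutual_info mu A B = 0.
Proof.
move=> indep; apply: big1 => a _; apply: big1 => b _ /=.
case: ifPn => // pab_neq0; rewrite indep in pab_neq0 *.
by rewrite divff // /log2 ln1 mul0r mulr0.
Qed.

End MutualInfo.

Lemma sum_pair_split (X D : finType) (nu : X -> R) (w : R) (P : pred D) (Q : X -> D -> bool)
    (C : pred (X * D)) :
  (forall om, C om = P om.2 && Q om.1 om.2) ->
  \sum_(om | C om) nu om.1 * w = w * \sum_(d | P d) \sum_(x | Q x d) nu x.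
Proof.
move=> CE; rewrite (eq_bigl _ _ CE) big_mkcond.
rewrite -(pair_bigA _ (fun x d => if P d && Q x d then nu x * w else 0)).
rewrite exchange_big [X in _ = _ * X]big_mkcond mulr_sumr; apply: eq_bigr => d _.
case: (P d); last by rewrite big1 ?mulr0.
rewrite [X in _ = _ * X]big_mkcond mulr_sumr; apply: eq_bigr => x _.
by case: (Q x d); rewrite ?mulr0 // mulrC.
Qed.

Section OtherDemands.
Variables (N K : nat) (k : 'I_K).

Lemma sum_own_demand (f : 'I_N -> R) :
  \sum_(d : demT N K) f (d k) = (N ^ K.-1)%:R * \sum_i f i.
Proof.
pose g (j : 'I_K) (i : 'I_N) := if j == k then f i else 1.
have -> : \sum_(d : demT N K) f (d k) = \sum_(d : demT N K) \prod_j g j (d j).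
  by apply: eq_bigr => d _; rewrite (bigD1 k) //= /g eqxx big1 ?mulr1 // => j /negbTE ->.
rewrite -(bigA_distr_bigA g) (bigD1 k) //= /g eqxx mulrC.
rewrite (eq_bigr (fun _ => N%:R)) => [|j /negbTE ->]; last by rewrite sumr_const card_ord.
by rewrite prodr_const cardC1 card_ord natrX.
Qed.

Lemma sum_other_demands_eq (d0 : demT N K) (f : 'I_N -> R) :
  \sum_(d | other_demands k d == other_demands k d0) f (d k) = \sum_i f i.
Proof.
pose fill i : demT N K := [ffun j => if j == k then i else d0 j].
have fillK d : other_demands k d == other_demands k d0 -> fill (d k) = d.
  move=> /eqP /ffunP eq_d; apply/ffunP => j; rewrite ffunE.
  case: eqP => [-> //|/eqP neq_jk].
  by move: (eq_d j); rewrite !ffunE (negbTE neq_jk) => -[].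
rewrite (reindex_onto fill (fun d => d k) fillK); apply: eq_big => [i|i _].
  rewrite /fill ffunE eqxx eqxx andbT; apply/eqP/ffunP => j; rewrite !ffunE.
  by case: (j == k).
by rewrite ffunE eqxx.
Qed.

Variables (X beta : finType) (nu : X -> R) (Y : X -> demT N K -> beta).

Lemma law_own_demand_of_bijection (hide : demT N K -> X -> X) :
  (forall d, injective (hide d)) -> (forall d x, nu (hide d x) = nu x) ->
  (forall (d d' : demT N K) x, d k = d' k -> Y (hide d x) d = Y (hide d' x) d') ->
  forall (d d' : demT N K) b, d k = d' k ->
    \sum_(x | Y x d == b) nu x = \sum_(x | Y x d' == b) nu x.
Proof.
move=> hide_inj nu_hide Y_hide d d' b eq_dk.
rewrite (reindex_inj (hide_inj d)) [RHS](reindex_inj (hide_inj d')).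
by apply: eq_big => [x|x _]; rewrite ?(Y_hide _ d') ?nu_hide.
Qed.

Hypotheses (N_gt0 : (0 < N)%N) (nu_sum1 : \sum_x nu x = 1).
Hypothesis law_own_demand : forall (d d' : demT N K) b,
  d k = d' k -> \sum_(x | Y x d == b) nu x = \sum_(x | Y x d' == b) nu x.

Lemma mutual_info_other_demands :
  mutual_info (fun om : X * demT N K => nu om.1 * N%:R ^- K)
    (fun om => other_demands k om.2) (fun om => Y om.1 om.2) = 0.
Proof.
apply: mutual_info_indep => a b /=.
set cst := N%:R ^- K.
pose law i := \sum_(x | Y x [ffun => i] == b) nu x.
have lawE d : \sum_(x | Y x d == b) nu x = law (d k) by apply: law_own_demand; rewrite ffunE.
rewrite (@sum_pair_split _ _ nu cst (fun d => other_demands k d == a) (fun x d => Y x d == b)) //.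
rewrite (@sum_pair_split _ _ nu cst (fun d => other_demands k d == a) (fun _ _ => true)) => [|om];
  last by rewrite andbT.
rewrite (@sum_pair_split _ _ nu cst predT (fun x d => Y x d == b)) //.
have [d0 /eqP <-|no_d0] := pickP (fun d : demT N K => other_demands k d == a); last first.
  by rewrite !(eq_bigl _ _ no_d0) !big_pred0_eq mulr0 mul0r.
rewrite !(eq_bigr _ (fun d _ => lawE d)) (eq_bigr _ (fun d _ => nu_sum1)).
rewrite (sum_other_demands_eq d0 (fun _ => 1)) !sum_other_demands_eq.
rewrite sum_own_demand sumr_const card_ord.
have cstN : cst * (N ^ K)%:R = 1 by rewrite natrX mulVf // expf_neq0 // pnatr_eq0 -lt0n.
have K_gt0 : (0 < K)%N by case: k => i; apply: leq_ltn_trans.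
have NK : (N ^ K)%:R = N%:R * (N ^ K.-1)%:R :> R by rewrite -natrM -expnS prednK.
transitivity (cst * (N ^ K)%:R * (cst * \sum_i law i)); first by rewrite cstN mul1r.
by rewrite NK; ring.
Qed.

End OtherDemands.

Lemma is_pmf_uniform (T : finType) : (0 < #|T|)%N -> is_pmf (fun _ : T => #|T|%:R^-1).
Proof.
move=> T_gt0; split=> [_|]; first by rewrite invr_ge0 ler0n.
by rewrite sumr_const -[_ *+ _]mulr_natr mulVf // pnatr_eq0 -lt0n.
Qed.

Lemma ord_lt_of_pred_lt (p : nat) (y : R) : p.-1%:R < y -> forall i : 'I_p, i%:R < y.
Proof.
move=> lt_y [i /= lt_ip]; apply: le_lt_trans lt_y.
by rewrite ler_nat -ltnS prednK // (leq_ltn_trans _ lt_ip).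
Qed.

Lemma exp2_pred_lt_powR (b : nat) (y : R) : b%:R <= y -> (2 ^ b).-1%:R < powR 2 y.
Proof.
move=> le_by; apply: (@lt_le_trans _ _ (2 ^ b)%:R).
  by rewrite ltr_nat ltn_predL expn_gt0.
by rewrite natrX -powR_mulrn ?ler0n // ler_powR // ler1n.
Qed.

Lemma powR_gt1 (a y : R) : 1 < a -> 0 < y -> 1 < powR a y.
Proof.
move=> a_gt1 y_gt0; rewrite /powR gt_eqF ?(lt_trans ltr01) //.
by rewrite expR_gt1 mulr_gt0 // ln_gt0.
Qed.

Notation bits x := {ffun 'I_x -> 'I_2}.

Section Scheme.
Variables n m a c e : nat.
Local Notation N := n.+1.
Local Notation K := m.+1.
Local Notation U := ('I_K * 'I_N)%type.

Definition file_size := (a + c * (K * N) + e)%N.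
Local Notation F := file_size.
Local Notation part := (bits a * {ffun U -> bits c} * bits e)%type.

Lemma card_part : #|{: part}| = (2 ^ F)%N.
Proof.
rewrite !card_prod !card_ffun !card_ord card_prod !card_ord.
by rewrite /file_size !expnD -expnM.
Qed.

Definition split_file (x : fileT F) : part := enum_val (cast_ord (esym card_part) x).
Definition merge_file (y : part) : fileT F := cast_ord card_part (enum_rank y).

Lemma split_fileK : cancel split_file merge_file.
Proof. by move=> x; rewrite /merge_file /split_file enum_valK cast_ordKV. Qed.

Definition partA (x : fileT F) := (split_file x).1.1.
Definition partB (x : fileT F) := (split_file x).1.2.
Definition partC (x : fileT F) := (split_file x).2.

Lemma merge_parts x : merge_file (partA x, partB x, partC x) = x.
Proof. by rewrite -[RHS]split_fileK /partA /partB /partC; case: (split_file x) => [[]]. Qed.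

Local Notation key := (bits a * 'I_N)%type.
Local Notation keys := {dffun forall k : 'I_K, key}.

Definition few_files := (N <= K)%N.
(* [slots = minn N K], written as a successor so that [inord] targets ['I_slots]. *)
Definition slots := (minn n m).+1.

Definition shifts (d : demT N K) (s : keys) : {ffun 'I_K -> 'I_N} :=
  [ffun j => d j - (s j).2].

(* With [c = 0] there are no coded pieces and no shifts need to be sent; forcing them to [0]
   keeps the auxiliary message trivial even for one-bit files. *)
Definition aux_alphabet := {t : {ffun 'I_K -> 'I_N} | (c == 0)%N ==> (t == 0)}.

Lemma aux0_subproof : (c == 0)%N ==> ((0 : {ffun 'I_K -> 'I_N}) == 0).
Proof. by rewrite eqxx implybT. Qed.

Definition aux (d : demT N K) (s : keys) : aux_alphabet :=
  insubd (exist _ 0 aux0_subproof) (shifts d s).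

Definition coded_sum (w : libT N F) (t : {ffun 'I_K -> 'I_N}) : bits c :=
  \sum_(u : U) partB (w (u.2 + t u.1)) u.

Definition A_slots (w : libT N F) (d : demT N K) (s : keys) : {ffun 'I_slots -> bits a} :=
  [ffun j : 'I_slots => if few_files then partA (w (inord j))
                        else partA (w (d (inord j))) + (s (inord j)).1].

Local Notation message := ({ffun 'I_slots -> bits a} * bits c)%type.

Definition transmission w d s : message := (A_slots w d s, coded_sum w (val (aux d s))).

Local Notation cache_content :=
  ({ffun 'I_N -> bits e} * {ffun 'I_N -> {ffun 'I_#|{: U}|.-1 -> bits c}})%type.

(* User [k] with shift [sh] stores every piece but [B_(k, sh)]; the others are enumerated by
   lifting around the rank [hole k sh]. *)
Definition hole (k : 'I_K) (sh : 'I_N) : 'I_#|{: U}| := enum_rank ((k, sh) : U).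

Definition cache k sh (w : libT N F) : cache_content :=
  ([ffun i => partC (w i)],
   [ffun i => [ffun j => partB (w i) (enum_val (lift (hole k sh) j))]]).

Definition cached_piece k sh (z : cache_content) (i : 'I_N) (u : U) : bits c :=
  if unlift (hole k sh) (enum_rank u) is Some j then z.2 i j else 0.

Definition decode (k : 'I_K) (dk : 'I_N) (x : key) (t : {ffun 'I_K -> 'I_N})
    (y : message) (z : cache_content) : fileT F :=
  let: (pad, sh) := x in
  let A := if few_files then y.1 (inord dk) else y.1 (inord k) - pad in
  let B := [ffun u : U => if u == (k, sh) then
              y.2 - \sum_(u' : U | u' != (k, sh)) cached_piece k sh z (u'.2 + t u'.1) u'
            else cached_piece k sh z dk u] in
  merge_file (A, B, z.1 dk).

Lemma cached_pieceE k sh w i u :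
  u != (k, sh) -> cached_piece k sh (cache k sh w) i u = partB (w i) u.
Proof.
move=> u_neq; rewrite /cached_piece.
have hole_neq : hole k sh != enum_rank u by apply: contra u_neq => /eqP /enum_rank_inj ->.
by case: (unlift_some hole_neq) => j u_lift ->; rewrite !ffunE -u_lift enum_rankK.
Qed.

Lemma decode_A_slot w d s k :
  (if few_files then A_slots w d s (inord (d k))
   else A_slots w d s (inord k) - (s k).1) = partA (w (d k)).
Proof.
rewrite /A_slots /few_files; case: ifP => few; rewrite ffunE few.
  by rewrite inordK ?inord_val //; move: (ltn_ord (d k)) few; lia.
by rewrite inordK ?inord_val ?addrK //; move: (ltn_ord k) few; lia.
Qed.

Lemma decode_coded_sum (w : libT N F) (d : demT N K) (s : keys) (k : 'I_K) :
  let sh := (s k).2 in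
  coded_sum w (val (aux d s)) -
    \sum_(u : U | u != (k, sh)) cached_piece k sh (cache k sh w) (u.2 + val (aux d s) u.1) u
  = partB (w (d k)) (k, sh).
Proof.
have [c0|c_neq0] : c = 0%N \/ c != 0%N by case: (c =P 0%N) => [|/eqP]; [left|right].
  have bits_c_eq : forall u v : bits c, u = v by rewrite c0 => u v; apply/ffunP => -[].
  exact: bits_c_eq.
have -> : val (aux d s) = shifts d s by rewrite /aux insubdK // /in_mem /= (negbTE c_neq0).
rewrite /coded_sum (bigD1 (k, (s k).2)) //=.
rewrite [X in _ - X](eq_bigr _ (fun u u_neq => cached_pieceE w _ u_neq)) addrK.
by rewrite /shifts ffunE subrKC.
Qed.

Lemma decode_transmission (w : libT N F) (d : demT N K) (s : keys) (k : 'I_K) :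
  decode k (d k) (s k) (val (aux d s)) (transmission w d s) (cache k (s k).2 w) = w (d k).
Proof.
rewrite -[RHS]merge_parts /decode; case: (s k) (decode_A_slot w d s k) (decode_coded_sum w d s k).
move=> pad sh /= -> coded_hole; rewrite ffunE; congr (merge_file (_, _, _)).
apply/ffunP => u; rewrite ffunE; case: eqP => [->|/eqP u_neq]; first exact: coded_hole.
by rewrite cached_pieceE.
Qed.

Definition hide_keys (k : 'I_K) (w : libT N F) (d : demT N K) (s : keys) : keys :=
  [ffun j => if j == k then s j else ((s j).1 - partA (w (d j)), d j - (s j).2)].

Lemma hide_keys_inj k w d : injective (hide_keys k w d).
Proof.
move=> s1 s2 /ffunP eq_hide; apply/ffunP => j; move: (eq_hide j); rewrite !ffunE.
case: ifP => // _ /(congr1 (fun x => (x.1 + partA (w (d j)), d j - x.2))) /=.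
by rewrite !subrK !subKr -!surjective_pairing.
Qed.

Lemma hide_keys_own k w d s : hide_keys k w d s k = s k.
Proof. by rewrite ffunE eqxx. Qed.

Lemma shifts_hide_keys k w d s :
  shifts d (hide_keys k w d s) = [ffun j => if j == k then d k - (s k).2 else (s j).2].
Proof.
by apply/ffunP => j; rewrite !ffunE; case: eqP => [-> //|_] /=; rewrite subKr.
Qed.

Lemma A_slots_hide_keys k w d s :
  A_slots w d (hide_keys k w d s) =
  [ffun j : 'I_slots => if few_files then partA (w (inord j))
             else if inord j == k then partA (w (d k)) + (s k).1 else (s (inord j)).1].
Proof.
apply/ffunP => j; rewrite !ffunE; case: few_files => //.
by case: eqP => [-> //|_] /=; rewrite subrKC.
Qed.

Definition view (k : 'I_K) (x : unit * keys * libT N F) (d : demT N K) :=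
  let: (_, s, w) := x in
  ((enum_rank (cache k (s k).2 w), s k), (enum_rank (transmission w d s), aux d s), d k).

Lemma view_hide_keys k p s w (d d' : demT N K) : d k = d' k ->
  view k (p, hide_keys k w d s, w) d = view k (p, hide_keys k w d' s, w) d'.
Proof.
move=> eq_dk.
by rewrite /view /transmission /aux !hide_keys_own !shifts_hide_keys !A_slots_hide_keys eq_dk.
Qed.

Lemma card_views :
  #|{: unit * keys * libT N F}| = ((#|{: bits a}| * N) ^ K * (2 ^ F) ^ N)%N.
Proof. by rewrite !card_prod card_unit mul1n card_ffun card_ffun card_prod !card_ord. Qed.

Lemma uniform_weight :
  #|{: unit}|%:R^-1 * (\prod_(j : 'I_K) #|{: key}|%:R^-1) * (2 ^ F)%:R ^- N
  = #|{: unit * keys * libT N F}|%:R^-1 :> R.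
Proof.
rewrite card_views prodr_const card_ord card_unit invr1 mul1r.
by rewrite exprVn -invfM -!natrX -natrM card_prod card_ord.
Qed.

Lemma view_private k :
  mutual_info (fun om : unit * keys * libT N F * demT N K =>
                 #|{: unit * keys * libT N F}|%:R^-1 * N%:R ^- K)
    (fun om => other_demands k om.2) (fun om => view k om.1 om.2) = 0.
Proof.
apply: (mutual_info_other_demands (nu := fun=> #|{: unit * keys * libT N F}|%:R^-1)).
- by [].
- by apply: (is_pmf_uniform _).2; rewrite card_views card_ffun !card_ord !(muln_gt0, expn_gt0).
pose hide d (x : unit * keys * libT N F) := let: (p, s, w) := x in (p, hide_keys k w d s, w).
apply: (law_own_demand_of_bijection (hide := hide)) => [d [[p1 s1] w1] [[p2 s2] w2]|//|d d' x].
  by case=> -> + eq_w; rewrite eq_w => /hide_keys_inj ->.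
by case: x => [[p s] w] /(view_hide_keys p s w).
Qed.

Definition cache_bits := (N * (e + c * (K * N).-1))%N.
Definition message_bits := (slots * a + c)%N.

Lemma card_cache : #|{: cache_content}| = (2 ^ cache_bits)%N.
Proof.
rewrite card_prod !card_ffun !card_ord card_prod !card_ord.
by rewrite /cache_bits -!expnM -expnD mulnDr mulnA [(e * N)%N]mulnC [(c * _ * N)%N]mulnC.
Qed.

Lemma card_message : #|{: message}| = (2 ^ message_bits)%N.
Proof. by rewrite card_prod !card_ffun !card_ord -expnM [(a * _)%N]mulnC -expnD. Qed.

Lemma card_aux : #|{: aux_alphabet}| = (if c == 0 then 1 else N ^ K)%N.
Proof.
rewrite card_sig; case: eqP => _; last by rewrite eq_cardT // -cardT card_ffun !card_ord.
by apply: (@eq_card1 _ (0 : {ffun 'I_K -> 'I_N})) => t; rewrite !inE.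
Qed.

Lemma log2_card_aux (eps : R) : 0 <= eps ->
  (c = 0%N \/ log2 (N ^ K)%:R <= eps * F%:R) -> log2 #|{: aux_alphabet}|%:R <= eps * F%:R.
Proof.
move=> eps_ge0 aux_le; rewrite card_aux; case: eqP => [_|c_neq0].
  by rewrite /log2 ln1 mul0r mulr_ge0.
by case: aux_le.
Qed.

Lemma scheme_private (M Rt eps : R) : 0 <= eps ->
  (2 ^ cache_bits).-1%:R < powR 2 (M * F%:R) ->
  (2 ^ message_bits).-1%:R < powR 2 (Rt * F%:R) ->
  (c = 0%N \/ log2 (N ^ K)%:R <= eps * F%:R) ->
  private_scheme N K M Rt F eps.
Proof.
move=> eps_ge0 cache_lt message_lt aux_le.
exists unit, (fun _ => #|{: unit}|%:R^-1), (fun _ => key), (fun _ _ => #|{: key}|%:R^-1),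
  #|{: cache_content}|, #|{: message}|, aux_alphabet,
  (fun k x _ w => enum_rank (cache k x.2 w)), (fun w d _ s => enum_rank (transmission w d s)),
  (fun d _ s => aux d s), (fun k dk x t y z => decode k dk x (val t) (enum_val y) (enum_val z)).
have key_gt0 : (0 < #|{: key}|)%N by apply/card_gt0P; exists (0, 0).
split; first by apply: is_pmf_uniform; rewrite card_unit.
split; first by move=> _; apply: is_pmf_uniform.
split; first by apply: ord_lt_of_pred_lt; rewrite card_cache.
split; first by apply: ord_lt_of_pred_lt; rewrite card_message.
split; first exact: log2_card_aux.
split; first by move=> w d _ s k; rewrite !enum_rankK decode_transmission.
move=> Om mu k; rewrite -(view_private k).
apply: eq_mutual_info; case=> [[[p s] w] d] //.
by congr (_ * _); exact: uniform_weight.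
Qed.

End Scheme.

Lemma achievable_full_memory (n m : nat) (Rt : R) :
  achievable_private n.+1 m.+1 n.+1%:R Rt.
Proof.
move=> eps eps_gt0; exists (file_size n m 0 0 1); split => //.
apply: scheme_private; [exact: ltW| |by rewrite /message_bits muln0 powR_gt0|by left].
by apply: exp2_pred_lt_powR; rewrite /cache_bits /file_size /= addn0 mulr1 muln1.
Qed.

(* With one-bit files the whole file is broadcast.  A two-valued message fits into [[2^(R F)]]
   as soon as [R F > 0], since [[2^x]] is the set of integers below [2^x]; this settles
   [min(N,K) = 1] with [0 < M < N], where no bit-splitting of large files meets both budgets. *)
Lemma achievable_one_bit (n m : nat) (M : R) :
  0 <= M < n.+1%:R -> M = 0 \/ slots n m = 1%N ->
  achievable_private n.+1 m.+1 M ((slots n m)%:R * (1 - M / n.+1%:R)).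
Proof.
move=> /andP[M_ge0 M_ltN] M0_or_slots1 eps eps_gt0.
exists (file_size n m 1 0 0); split => //.
apply: scheme_private; [exact: ltW|by rewrite /cache_bits muln0 powR_gt0| |by left].
rewrite /message_bits /file_size /= muln1 addn0 mulr1.
case: M0_or_slots1 => [->|->]; first by apply: exp2_pred_lt_powR; rewrite mul0r subr0 mulr1.
by rewrite mul1r powR_gt1 ?ltr1n // subr_gt0 ltr_pdivrMr ?ltr0n // mul1r.
Qed.

Lemma coded_message_budget (L q F : nat) (alpha : R) :
  (1 < L)%N -> alpha * F%:R < q.+1%:R -> (q + 2 < F)%N ->
  (L * (F - q - 2) + 2)%:R <= L%:R * (1 - alpha) * F%:R.
Proof.
move=> L_gt1 q_gt F_gt.
have L_ge2 : 2 <= L%:R :> R by rewrite ler_nat.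
have : L%:R * (alpha * F%:R - q%:R) <= L%:R * 1.
  by rewrite ler_pM2l ?(lt_le_trans _ L_ge2) //; move: q_gt; rewrite -natr1; lra.
rewrite natrD natrM !natrB; [lra|lia|lia].
Qed.

Lemma achievable_coded (n m : nat) (M : R) :
  0 < M < n.+1%:R -> (1 < slots n m)%N ->
  achievable_private n.+1 m.+1 M ((slots n m)%:R * (1 - M / n.+1%:R)).
Proof.
move=> /andP[M_gt0 M_ltN] slots_gt1 eps eps_gt0.
set N := n.+1; set KN := (m.+1 * N)%N; set alpha := M / N%:R; set lg := log2 (N ^ m.+1)%:R.
have N_gt0 : 0 < N%:R :> R by rewrite ltr0n.
have alpha_gt0 : 0 < alpha by rewrite divr_gt0.
have alpha_lt1 : alpha < 1 by rewrite ltr_pdivrMr // mul1r.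
have lg_ge0 : 0 <= lg by rewrite divr_ge0 ?ln_ge0 ?ler1n ?expn_gt0 // ltW // ln_gt0 // ltr1n.
pose F := (Num.Def.trunc ((2 * KN)%:R / alpha + 2 / (1 - alpha) + lg / eps)).+1.
have [F_q F_slack F_aux] :
    [/\ (2 * KN)%:R < alpha * F%:R, 2 < (1 - alpha) * F%:R & lg <= eps * F%:R].
  have := truncnS_gt ((2 * KN)%:R / alpha + 2 / (1 - alpha) + lg / eps).
  rewrite -/F => lt_F.
  have t1 : 0 <= (2 * KN)%:R / alpha by rewrite divr_ge0 // ltW.
  have t2 : 0 <= 2 / (1 - alpha) by rewrite divr_ge0 // subr_ge0 ltW.
  have t3 : 0 <= lg / eps by rewrite divr_ge0 // ltW.
  split; rewrite mulrC; [rewrite -ltr_pdivrMr // | rewrite -ltr_pdivrMr ?subr_gt0 //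
                        | rewrite -ler_pdivrMr //]; lra.
set q := Num.Def.trunc (alpha * F%:R).
have alF_ge0 : 0 <= alpha * F%:R by rewrite mulr_ge0 // ltW.
have /andP[q_le q_gt] := truncn_itv alF_ge0.
have q_ge : (2 * KN <= q)%N by rewrite -ltnS -(ltr_nat R) (lt_trans F_q).
have q_lt : (q + 2 < F)%N by rewrite -(ltr_nat R) natrD; lra.
have KN_gt0 : (0 < KN)%N by rewrite muln_gt0.
(* Each user caches [e + 2 (KN - 1) = q] bits of every file. *)
exists (file_size n m (F - q - 2) 2 (q - 2 * KN.-1)).
have F_eq : file_size n m (F - q - 2) 2 (q - 2 * KN.-1) = F by rewrite /file_size -/KN; lia.
split; first by rewrite F_eq.
apply: scheme_private; rewrite ?F_eq; [exact: ltW| | |by right].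
  apply: exp2_pred_lt_powR.
  rewrite /cache_bits -/KN (_ : (q - 2 * KN.-1 + 2 * KN.-1 = q)%N); last lia.
  have M_eq : M = N%:R * alpha by rewrite mulrC divfK ?gt_eqF.
  by rewrite natrM M_eq -mulrA ler_pM2l.
by apply: exp2_pred_lt_powR; apply: coded_message_budget.
Qed.

Theorem theorem2 (N K : nat) (M : R) :
  (0 < N)%N -> (0 < K)%N -> 0 <= M <= N%:R ->
  achievable_private N K M (Num.min N%:R K%:R * (1 - M / N%:R)).
Proof.
case: N => // n _; case: K => // m _ /andP[M_ge0 M_leN].
have -> : Num.min n.+1%:R m.+1%:R = (slots n m)%:R :> R by rewrite -natr_min minEnat minnSS.
have [->|M_neqN] := eqVneq M n.+1%:R; first exact: achievable_full_memory.
have M_ltN : M < n.+1%:R by rewrite lt_neqAle M_neqN.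
have [uncoded|] := boolP ((M == 0) || (slots n m == 1%N)).
  apply: achievable_one_bit; first by rewrite M_ge0.
  by case/orP: uncoded => /eqP; [left|right].
rewrite negb_or => /andP[M_neq0 slots_neq1].
apply: achievable_coded; first by rewrite lt_def M_neq0 M_ge0.
by rewrite ltn_neqAle eq_sym slots_neq1.
Qed.
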